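(* For $\mathbf{x}=(x_0,x_1),\ \mathbf{y}=(y_0,y_1)\in\mathbb{R}^2$ let $\langle\mathbf{x},\mathbf{y}\rangle:=x_0y_0-x_1y_1$ and $$k(\mathbf{x},\mathbf{y})=\frac{\langle\mathbf{x},\mathbf{x}\rangle-\langle\mathbf{y},\mathbf{y}\rangle}{\langle\mathbf{x}+\mathbf{y},\mathbf{x}+\mathbf{y}\rangle}.$$ Define the momentum-energy map $$\mathbf{R}:(\mathbf{x},\mathbf{y})\mapsto(\mathbf{u},\mathbf{v}):=\big(\mathbf{y}+k(\mathbf{x},\mathbf{y})(\mathbf{x}+\mathbf{y}),\ \mathbf{x}-k(\mathbf{x},\mathbf{y})(\mathbf{x}+\mathbf{y})\big)$$ (defined where $\langle\mathbf{x}+\mathbf{y},\mathbf{x}+\mathbf{y}\rangle\neq 0$). Then $\mathbf{R}$ is a (non-parametric) quadrirational Yang--Baxter map, and it has Lax matrix $$\mathbf{L}(\mathbf{x},\zeta)=\begin{pmatrix}\zeta & x_0+x_1\\ x_0-x_1 & \zeta\end{pmatrix},$$ i.e. $\mathbf{L}(\mathbf{u},\zeta)\mathbf{L}(\mathbf{v},\zeta)=\mathbf{L}(\mathbf{y},\zeta)\mathbf{L}(\mathbf{x},\zeta)$ for all $\zeta\in\mathbb{C}$ whenever $(\mathbf{u},\mathbf{v})=\mathbf{R}(\mathbf{x},\mathbf{y})$.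
   Context: A map $R:\mathcal{X}\times\mathcal{X}\to\mathcal{X}\times\mathcal{X}$, $R(x,y)=(u(x,y),v(x,y))$, is a Yang--Baxter map if $R_{23}\circ R_{13}\circ R_{12}=R_{12}\circ R_{13}\circ R_{23}$ on $\mathcal{X}^3$, where $R_{12}(x,y,z)=(u(x,y),v(x,y),z)$, $R_{13}(x,y,z)=(u(x,z),y,v(x,z))$, $R_{23}(x,y,z)=(x,u(y,z),v(y,z))$. It is quadrirational if, for fixed $y$ and fixed $x$ respectively, the maps $u(\cdot,y)$ and $v(x,\cdot)$ are birational isomorphisms of $\mathcal{X}$ to itself. A matrix $L(x,\zeta)$ depending on $x\in\mathcal{X}$ and a spectral parameter $\zeta\in\mathbb{C}$ is a Lax matrix of $R$ if $L(u,\zeta)L(v,\zeta)=L(y,\zeta)L(x,\zeta)$ whenever $(u,v)=R(x,y)$. Here $\mathcal{X}=\mathbb{R}^2$ (maps understood generically, where defined). *)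

From Stdlib Require Import Reals List.
From Coquelicot Require Import Complex.
Open Scope R_scope.

Definition pt := (R * R)%type.

Definition padd (x y : pt) : pt := (fst x + fst y, snd x + snd y).
Definition psub (x y : pt) : pt := (fst x - fst y, snd x - snd y).
Definition pscal (c : R) (x : pt) : pt := (c * fst x, c * snd x).

Definition mink (x y : pt) : R := fst x * fst y - snd x * snd y.

(** k(x,y) = (<x,x> - <y,y>) / <x+y,x+y>  (Rdiv is total; only used where
    the denominator is nonzero). *)
Definition kfun (x y : pt) : R :=
  (mink x x - mink y y) / mink (padd x y) (padd x y).

Definition Rdom (x y : pt) : Prop := mink (padd x y) (padd x y) <> 0.

Definition u_map (x y : pt) : pt := padd y (pscal (kfun x y) (padd x y)).
Definition v_map (x y : pt) : pt := psub x (pscal (kfun x y) (padd x y)).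
Definition Rmap (x y : pt) : pt * pt := (u_map x y, v_map x y).

Definition Ropt (x y : pt) : option (pt * pt) :=
  if Req_EM_T (mink (padd x y) (padd x y)) 0 then None else Some (Rmap x y).

Definition triple := (pt * pt * pt)%type.

Definition R12 (t : triple) : option triple :=
  match t with (x, y, z) =>
    match Ropt x y with Some (u, v) => Some (u, v, z) | None => None end end.
Definition R13 (t : triple) : option triple :=
  match t with (x, y, z) =>
    match Ropt x z with Some (u, v) => Some (u, y, v) | None => None end end.
Definition R23 (t : triple) : option triple :=
  match t with (x, y, z) =>
    match Ropt y z with Some (u, v) => Some (x, u, v) | None => None end end.

Definition obind {A B : Type} (f : A -> option B) (o : option A) : option B :=
  match o with Some a => f a | None => None end.

(** Yang--Baxter equation R23 o R13 o R12 = R12 o R13 o R23, holding at every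
    point of X^3 where both composites are defined. *)
Definition YB_generic : Prop :=
  forall (t a b : triple),
    obind R23 (obind R13 (R12 t)) = Some a ->
    obind R12 (obind R13 (R23 t)) = Some b ->
    a = b.

(** Real polynomials in two variables, as finite lists of monomials
    (coefficient, exponent of x0, exponent of x1). *)
Definition poly2 := list (R * nat * nat).

Definition peval (p : poly2) (x : pt) : R :=
  fold_right (fun m acc => match m with (c, i, j) =>
                c * (fst x) ^ i * (snd x) ^ j + acc end) 0 p.

(** A polynomial is nonzero as a function (equivalently, as a polynomial over R). *)
Definition nonzero_poly (h : poly2) : Prop := exists x : pt, peval h x <> 0.

Record ratmap := RatMap { num0 : poly2; den0 : poly2; num1 : poly2; den1 : poly2 }.

Definition rdefined (F : ratmap) (x : pt) : Prop :=
  peval (den0 F) x <> 0 /\ peval (den1 F) x <> 0.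

Definition reval (F : ratmap) (x : pt) : pt :=
  (peval (num0 F) x / peval (den0 F) x, peval (num1 F) x / peval (den1 F) x).

(** f : X -> X is a birational isomorphism of X = R^2 to itself: it coincides,
    on a Zariski-dense open set, with a rational map F admitting a rational
    inverse G (G o F = id and F o G = id generically). *)
Definition birational (f : pt -> pt) : Prop :=
  exists (F G : ratmap) (h1 h2 : poly2),
    nonzero_poly h1 /\ nonzero_poly h2 /\
    (forall x, peval h1 x <> 0 ->
       rdefined F x /\ reval F x = f x /\
       rdefined G (reval F x) /\ reval G (reval F x) = x) /\
    (forall w, peval h2 w <> 0 ->
       rdefined G w /\ rdefined F (reval G w) /\ reval F (reval G w) = w).

Definition quadrirational (u v : pt -> pt -> pt) : Prop :=
  (forall y, birational (fun x => u x y)) /\ (forall x, birational (fun y => v x y)).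

Record mat2 := Mat2 { m11 : C; m12 : C; m21 : C; m22 : C }.

Definition mmul (A B : mat2) : mat2 :=
  Mat2 (Cplus (Cmult (m11 A) (m11 B)) (Cmult (m12 A) (m21 B)))
       (Cplus (Cmult (m11 A) (m12 B)) (Cmult (m12 A) (m22 B)))
       (Cplus (Cmult (m21 A) (m11 B)) (Cmult (m22 A) (m21 B)))
       (Cplus (Cmult (m21 A) (m12 B)) (Cmult (m22 A) (m22 B))).

Definition Lax (x : pt) (zeta : C) : mat2 :=
  Mat2 zeta (RtoC (fst x + snd x)) (RtoC (fst x - snd x)) zeta.

(** In the light-cone coordinates [a = x0 + x1], [b = x0 - x1] one has
    [<x,x> = a b] and [L(x, zeta) = [[zeta, a], [b, zeta]]].  If [w = x + y] is
    not null and has slope [r = a_w / b_w], then [R(x,y) = (rho x, rho y)] where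
    [rho (a, b) = (r b, a / r)] is the Minkowski reflection fixing [w].  Hence
    [u + v = x + y], [a_u b_v = a_y b_x] and [b_u a_v = b_y a_x], which is the Lax
    equation; and [u(., y)] is inverted by [u(., -y)], because [u(x,y) - y] has the
    same slope as [x + y].  Two reflections compose to the boost
    [(a, b) |-> (l a, b / l)], [l] the ratio of their slopes, so each side of the
    Yang--Baxter equation moves [x], [y], [z] by boosts, and the equation reduces
    to the identity [r1 t3 = r2 t2 = r3 t1] between the slopes of the three
    reflections performed on either side. *)

From Stdlib Require Import Reals Lra List.
From Coquelicot Require Import Complex.
Open Scope R_scope.

Definition lc_plus (x : pt) : R := fst x + snd x.
Definition lc_minus (x : pt) : R := fst x - snd x.

Lemma pt_eq_lc x y : lc_plus x = lc_plus y -> lc_minus x = lc_minus y -> x = y.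
Proof. destruct x, y; unfold lc_plus, lc_minus; simpl; intros; f_equal; lra. Qed.

Lemma lc_plus_padd x y : lc_plus (padd x y) = lc_plus x + lc_plus y.
Proof. unfold lc_plus, padd; simpl; ring. Qed.

Lemma lc_minus_padd x y : lc_minus (padd x y) = lc_minus x + lc_minus y.
Proof. unfold lc_minus, padd; simpl; ring. Qed.

Lemma mink_lc x : mink x x = lc_plus x * lc_minus x.
Proof. unfold mink, lc_plus, lc_minus; ring. Qed.

Lemma padd_comm x y : padd x y = padd y x.
Proof. unfold padd; f_equal; ring. Qed.

Lemma Rdom_lc x y :
  Rdom x y <-> lc_plus x + lc_plus y <> 0 /\ lc_minus x + lc_minus y <> 0.
Proof.
  unfold Rdom; rewrite mink_lc, lc_plus_padd, lc_minus_padd.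
  split; [intro H; split; intro E; apply H; rewrite E; ring|].
  intros [Hp Hm]; exact (Rmult_integral_contrapositive_currified _ _ Hp Hm).
Qed.

Lemma Rdom_sym x y : Rdom x y -> Rdom y x.
Proof. unfold Rdom; now rewrite padd_comm. Qed.

Lemma Rdiv_neq0 a b : a <> 0 -> b <> 0 -> a / b <> 0.
Proof.
  intros Ha Hb; apply Rmult_integral_contrapositive_currified; [exact Ha|].
  now apply Rinv_neq_0_compat.
Qed.

Definition refl (r : R) (x : pt) : pt :=
  ((r * lc_minus x + lc_plus x / r) / 2, (r * lc_minus x - lc_plus x / r) / 2).

Lemma lc_plus_refl r x : lc_plus (refl r x) = r * lc_minus x.
Proof. unfold lc_plus at 1, refl; simpl; lra. Qed.

Lemma lc_minus_refl r x : lc_minus (refl r x) = lc_plus x / r.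
Proof. unfold lc_minus at 1, refl; simpl; lra. Qed.

Lemma refl_refl r s r' s' w : r <> 0 -> s <> 0 -> r' <> 0 -> s' <> 0 ->
  s * r' = s' * r -> refl s (refl r w) = refl s' (refl r' w).
Proof.
  intros Hr Hs Hr' Hs' E.
  apply pt_eq_lc; rewrite ?lc_plus_refl, ?lc_minus_refl, ?lc_plus_refl.
  - replace (s * (lc_plus w / r)) with (lc_plus w * (s * r') / (r * r')) by (field; auto).
    rewrite E; field; auto.
  - replace (r * lc_minus w / s) with (lc_minus w * (s' * r) / (s * s')) by (field; auto).
    rewrite <- E; field; auto.
Qed.

Lemma refl_involutive r x : r <> 0 -> refl r (refl r x) = x.
Proof.
  intros Hr; apply pt_eq_lc; rewrite ?lc_plus_refl, ?lc_minus_refl, ?lc_plus_refl;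
    field; exact Hr.
Qed.

Definition slope (w : pt) : R := lc_plus w / lc_minus w.

Lemma slope_neq0 x y : Rdom x y -> slope (padd x y) <> 0.
Proof.
  intros [Hp Hm]%Rdom_lc; unfold slope; rewrite lc_plus_padd, lc_minus_padd.
  now apply Rdiv_neq0.
Qed.

Lemma slope_spec x y : Rdom x y ->
  lc_plus x + lc_plus y = slope (padd x y) * (lc_minus x + lc_minus y).
Proof.
  intros [_ Hm]%Rdom_lc; unfold slope; rewrite lc_plus_padd, lc_minus_padd; field; exact Hm.
Qed.

Lemma kfun_swap x y : kfun y x = - kfun x y.
Proof. unfold kfun; rewrite padd_comm; unfold Rdiv; ring. Qed.

Lemma v_map_swap x y : v_map x y = u_map y x.
Proof.
  unfold v_map, u_map; rewrite kfun_swap, (padd_comm y x).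
  unfold psub, padd, pscal; simpl; f_equal; ring.
Qed.

Lemma u_map_refl x y : Rdom x y -> u_map x y = refl (slope (padd x y)) x.
Proof.
  intros HD; pose proof HD as [Hp Hm]%Rdom_lc.
  unfold slope; rewrite lc_plus_padd, lc_minus_padd.
  apply pt_eq_lc; rewrite ?lc_plus_refl, ?lc_minus_refl;
    destruct x as [x0 x1], y as [y0 y1];
    unfold Rdom, u_map, kfun, mink, padd, pscal, lc_plus, lc_minus in *;
    simpl in *; field; auto.
Qed.

Lemma v_map_refl x y : Rdom x y -> v_map x y = refl (slope (padd x y)) y.
Proof. intros HD; rewrite v_map_swap, u_map_refl, padd_comm; auto using Rdom_sym. Qed.

Lemma slope_refl_add r x z : r <> 0 -> Rdom (refl r x) z ->
  lc_plus x + r * lc_minus z <> 0 /\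
  slope (padd (refl r x) z) = r * (r * lc_minus x + lc_plus z) / (lc_plus x + r * lc_minus z).
Proof.
  intros Hr [Hp Hm]%Rdom_lc; rewrite lc_plus_refl in Hp; rewrite lc_minus_refl in Hm.
  assert (Hd : lc_plus x + r * lc_minus z <> 0).
  { intro E; apply Hm.
    replace (lc_plus x / r + lc_minus z) with ((lc_plus x + r * lc_minus z) / r) by (field; auto).
    rewrite E; unfold Rdiv; ring. }
  split; [exact Hd|].
  unfold slope; rewrite lc_plus_padd, lc_minus_padd, lc_plus_refl, lc_minus_refl.
  field; auto.
Qed.

Lemma slope_refl_add_refl r s y z : r <> 0 -> s <> 0 -> Rdom (refl r y) (refl s z) ->
  s * lc_plus y + r * lc_plus z <> 0 /\
  slope (padd (refl r y) (refl s z)) =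
    r * s * (r * lc_minus y + s * lc_minus z) / (s * lc_plus y + r * lc_plus z).
Proof.
  intros Hr Hs [Hp Hm]%Rdom_lc; rewrite !lc_plus_refl in Hp; rewrite !lc_minus_refl in Hm.
  assert (Hd : s * lc_plus y + r * lc_plus z <> 0).
  { intro E; apply Hm.
    replace (lc_plus y / r + lc_plus z / s)
      with ((s * lc_plus y + r * lc_plus z) / (r * s)) by (field; auto).
    rewrite E; unfold Rdiv; ring. }
  split; [exact Hd|].
  unfold slope; rewrite lc_plus_padd, lc_minus_padd, !lc_plus_refl, !lc_minus_refl.
  field; auto.
Qed.

(** [(a_i, b_i)] are the light-cone coordinates of [x], [y], [z]; [r_i] (resp.
    [t_i]) is the slope of the [i]-th reflection on the left (resp. right) side of
    the Yang--Baxter equation. *)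
Lemma slope_cocycle (a1 b1 a2 b2 a3 b3 r1 r2 r3 t1 t2 t3 : R) :
  r1 <> 0 -> r2 <> 0 -> t1 <> 0 -> t2 <> 0 ->
  a1 + a2 = r1 * (b1 + b2) -> a2 + a3 = t1 * (b2 + b3) ->
  a1 + r1 * b3 <> 0 -> r2 = r1 * (r1 * b1 + a3) / (a1 + r1 * b3) ->
  a3 + t1 * b1 <> 0 -> t2 = t1 * (t1 * b3 + a1) / (a3 + t1 * b1) ->
  r2 * a2 + r1 * a3 <> 0 -> r3 = r1 * r2 * (r1 * b2 + r2 * b3) / (r2 * a2 + r1 * a3) ->
  t1 * a1 + t2 * a2 <> 0 -> t3 = t2 * t1 * (t2 * b1 + t1 * b2) / (t1 * a1 + t2 * a2) ->
  r2 * t2 = r1 * t3 /\ r3 * t1 = r1 * t3.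
Proof.
  intros Hr1 Hr2 Ht1 Ht2 E1 E2 D2 Er2 D2' Et2 D3 Er3 D3' Et3.
  (* Once [a2] and [a3] are eliminated through [r1] and [t1], the claims are
     rational identities in the remaining variables. *)
  assert (a2 = r1 * (b1 + b2) - a1) by lra; subst a2.
  assert (a3 = t1 * (b2 + b3) - (r1 * (b1 + b2) - a1)) by lra; subst a3.
  subst t3; split.
  - field_simplify_eq; [|exact D3'].
    subst r2 t2; field; auto.
  - subst r3; field_simplify_eq; [|tauto].
    subst r2 t2; field; auto.
Qed.

Lemma refl_yang_baxter x y z :
  let r1 := slope (padd x y) in
  let r2 := slope (padd (refl r1 x) z) in
  let r3 := slope (padd (refl r1 y) (refl r2 z)) in
  let t1 := slope (padd y z) in
  let t2 := slope (padd x (refl t1 z)) in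
  let t3 := slope (padd (refl t2 x) (refl t1 y)) in
  Rdom x y -> Rdom (refl r1 x) z -> Rdom (refl r1 y) (refl r2 z) ->
  Rdom y z -> Rdom x (refl t1 z) -> Rdom (refl t2 x) (refl t1 y) ->
  (refl r2 (refl r1 x), refl r3 (refl r1 y), refl r3 (refl r2 z)) =
  (refl t3 (refl t2 x), refl t3 (refl t1 y), refl t2 (refl t1 z)).
Proof.
  intros r1 r2 r3 t1 t2 t3 D12 D13 D23 F23 F13 F12.
  pose proof (slope_neq0 _ _ D12) as Hr1; pose proof (slope_neq0 _ _ D13) as Hr2.
  pose proof (slope_neq0 _ _ D23) as Hr3; pose proof (slope_neq0 _ _ F23) as Ht1.
  pose proof (slope_neq0 _ _ F13) as Ht2; pose proof (slope_neq0 _ _ F12) as Ht3.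
  destruct (slope_refl_add r1 x z Hr1 D13) as [Dr2 Er2].
  destruct (slope_refl_add_refl r1 r2 y z Hr1 Hr2 D23) as [Dr3 Er3].
  destruct (slope_refl_add t1 z x Ht1 (Rdom_sym _ _ F13)) as [Dt2 Et2].
  rewrite (padd_comm (refl t1 z) x) in Et2.
  destruct (slope_refl_add_refl t2 t1 x y Ht2 Ht1 F12) as [Dt3 Et3].
  destruct (slope_cocycle (lc_plus x) (lc_minus x) (lc_plus y) (lc_minus y)
    (lc_plus z) (lc_minus z) r1 r2 r3 t1 t2 t3 Hr1 Hr2 Ht1 Ht2
    (slope_spec _ _ D12) (slope_spec _ _ F23) Dr2 Er2 Dt2 Et2 Dr3 Er3 Dt3 Et3) as [C1 C2].
  f_equal; [f_equal|]; apply refl_refl; auto; lra.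
Qed.

Lemma Ropt_refl x y u v : Ropt x y = Some (u, v) ->
  Rdom x y /\ u = refl (slope (padd x y)) x /\ v = refl (slope (padd x y)) y.
Proof.
  unfold Ropt; destruct Req_EM_T as [|HD]; [discriminate|].
  unfold Rmap; rewrite (u_map_refl x y HD), (v_map_refl x y HD); intros [= <- <-]; auto.
Qed.

Theorem yang_baxter : YB_generic.
Proof.
  intros [[x y] z] a b Hl Hr.
  unfold R12, R13, R23, obind in Hl, Hr.
  destruct (Ropt x y) as [[x1 y1]|] eqn:E12; [|discriminate]; simpl in Hl.
  destruct (Ropt x1 z) as [[x2 z2]|] eqn:E13; [|discriminate]; simpl in Hl.
  destruct (Ropt y1 z2) as [[y3 z3]|] eqn:E23; [|discriminate].
  destruct (Ropt y z) as [[y1' z1']|] eqn:F23; [|discriminate]; simpl in Hr.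
  destruct (Ropt x z1') as [[x2' z2']|] eqn:F13; [|discriminate]; simpl in Hr.
  destruct (Ropt x2' y1') as [[x3' y3']|] eqn:F12; [|discriminate].
  injection Hl as <-; injection Hr as <-.
  apply Ropt_refl in E12 as (D12 & -> & ->), F23 as (F23 & -> & ->).
  apply Ropt_refl in E13 as (D13 & -> & ->), F13 as (F13 & -> & ->).
  apply Ropt_refl in E23 as (D23 & -> & ->), F12 as (F12 & -> & ->).
  now apply refl_yang_baxter.
Qed.

Lemma Lax_lc x zeta : Lax x zeta = Mat2 zeta (RtoC (lc_plus x)) (RtoC (lc_minus x)) zeta.
Proof. reflexivity. Qed.

Lemma Lax_mul_eq x y u v zeta :
  lc_plus u + lc_plus v = lc_plus y + lc_plus x ->
  lc_minus u + lc_minus v = lc_minus y + lc_minus x ->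
  lc_plus u * lc_minus v = lc_plus y * lc_minus x ->
  lc_minus u * lc_plus v = lc_minus y * lc_plus x ->
  mmul (Lax u zeta) (Lax v zeta) = mmul (Lax y zeta) (Lax x zeta).
Proof.
  intros Ep Em Epm Emp; rewrite !Lax_lc; unfold mmul; cbn [m11 m12 m21 m22]; f_equal.
  - now rewrite <- !RtoC_mult, Epm.
  - transitivity (zeta * RtoC (lc_plus u + lc_plus v))%C; [rewrite RtoC_plus; ring|].
    rewrite Ep, RtoC_plus; ring.
  - transitivity (zeta * RtoC (lc_minus u + lc_minus v))%C; [rewrite RtoC_plus; ring|].
    rewrite Em, RtoC_plus; ring.
  - now rewrite <- !RtoC_mult, Emp.
Qed.

Lemma Lax_Rmap x y u v : Rdom x y -> Rmap x y = (u, v) ->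
  forall zeta : C, mmul (Lax u zeta) (Lax v zeta) = mmul (Lax y zeta) (Lax x zeta).
Proof.
  intros HD [= <- <-] zeta; rewrite u_map_refl, v_map_refl by exact HD.
  pose proof (slope_neq0 _ _ HD) as Hr; pose proof (slope_spec _ _ HD) as Es.
  set (r := slope (padd x y)) in *.
  apply Lax_mul_eq; rewrite ?lc_plus_refl, ?lc_minus_refl.
  - lra.
  - replace (lc_plus x / r + lc_plus y / r) with ((lc_plus x + lc_plus y) / r)
      by (field; exact Hr).
    rewrite Es; field; exact Hr.
  - field; exact Hr.
  - field; exact Hr.
Qed.

Definition pconst (c : R) : poly2 := (c, 0%nat, 0%nat) :: nil.
Definition pvar0 : poly2 := (1, 1%nat, 0%nat) :: nil.
Definition pvar1 : poly2 := (1, 0%nat, 1%nat) :: nil.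
Definition pscale_monomial (c : R) (i j : nat) (q : poly2) : poly2 :=
  map (fun '(d, k, l) => (c * d, (i + k)%nat, (j + l)%nat)) q.
Definition pmult (p q : poly2) : poly2 :=
  flat_map (fun '(c, i, j) => pscale_monomial c i j q) p.

Lemma peval_const c x : peval (pconst c) x = c.
Proof. unfold peval; simpl; ring. Qed.

Lemma peval_var0 x : peval pvar0 x = fst x.
Proof. unfold peval; simpl; ring. Qed.

Lemma peval_var1 x : peval pvar1 x = snd x.
Proof. unfold peval; simpl; ring. Qed.

Lemma peval_app p q x : peval (p ++ q) x = peval p x + peval q x.
Proof.
  induction p as [|[[c i] j] p IH]; unfold peval in *; simpl; [ring|].
  rewrite IH; ring.
Qed.

Lemma peval_scale_monomial c i j q x :
  peval (pscale_monomial c i j q) x = c * fst x ^ i * snd x ^ j * peval q x.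
Proof.
  induction q as [|[[d k] l] q IH]; unfold peval in *; simpl; [ring|].
  rewrite IH, !pow_add; ring.
Qed.

Lemma peval_mult p q x : peval (pmult p q) x = peval p x * peval q x.
Proof.
  induction p as [|[[c i] j] p IH]; unfold pmult in *; simpl; [unfold peval; simpl; ring|].
  rewrite peval_app, peval_scale_monomial, IH; unfold peval; simpl; ring.
Qed.

Definition ppeval (P : poly2 * poly2) (x : pt) : pt := (peval (fst P) x, peval (snd P) x).
Definition pmink (P Q : poly2 * poly2) : poly2 :=
  pmult (fst P) (fst Q) ++ pmult (pconst (-1)) (pmult (snd P) (snd Q)).
Definition pvars : poly2 * poly2 := (pvar0, pvar1).
Definition pshift (y : pt) : poly2 * poly2 :=
  (pvar0 ++ pconst (fst y), pvar1 ++ pconst (snd y)).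

Lemma peval_pmink P Q x : peval (pmink P Q) x = mink (ppeval P x) (ppeval Q x).
Proof.
  unfold pmink, mink, ppeval; cbn [fst snd].
  rewrite peval_app, !peval_mult, peval_const; ring.
Qed.

Lemma ppeval_pvars x : ppeval pvars x = x.
Proof. unfold ppeval; cbn [fst snd pvars]; rewrite peval_var0, peval_var1; now destruct x. Qed.

Lemma ppeval_pshift y x : ppeval (pshift y) x = padd x y.
Proof.
  unfold ppeval, padd; cbn [fst snd pshift].
  now rewrite !peval_app, peval_var0, peval_var1, !peval_const.
Qed.

Definition k_den (y : pt) : poly2 := pmink (pshift y) (pshift y).
Definition k_num (y : pt) : poly2 := pmink pvars pvars ++ pconst (- mink y y).

Lemma peval_k_den y x : peval (k_den y) x = mink (padd x y) (padd x y).
Proof. unfold k_den; now rewrite peval_pmink, ppeval_pshift. Qed.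

Lemma peval_k_num y x : peval (k_num y) x = mink x x - mink y y.
Proof. unfold k_num; rewrite peval_app, peval_pmink, ppeval_pvars, peval_const; ring. Qed.

Definition u_ratmap (y : pt) : ratmap :=
  RatMap (pmult (pconst (fst y)) (k_den y) ++ pmult (k_num y) (fst (pshift y))) (k_den y)
         (pmult (pconst (snd y)) (k_den y) ++ pmult (k_num y) (snd (pshift y))) (k_den y).

Lemma u_ratmap_spec y x : Rdom x y ->
  rdefined (u_ratmap y) x /\ reval (u_ratmap y) x = u_map x y.
Proof.
  intros HD; unfold rdefined, reval, u_ratmap; cbn [num0 den0 num1 den1 fst snd pshift].
  rewrite !peval_app, !peval_mult, !peval_const, peval_k_den, peval_k_num,
    !peval_app, peval_var0, peval_var1, !peval_const.
  split; [split; exact HD|].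
  unfold Rdom, u_map, kfun, padd, pscal in *; simpl; f_equal; field; exact HD.
Qed.

Definition u_dom (y : pt) : poly2 := pmult (k_den y) (k_num y).

Lemma peval_u_dom y x : peval (u_dom y) x = mink (padd x y) (padd x y) * (mink x x - mink y y).
Proof. unfold u_dom; now rewrite peval_mult, peval_k_den, peval_k_num. Qed.

Lemma u_dom_nonzero y : nonzero_poly (u_dom y).
Proof.
  destruct y as [y0 y1].
  set (c := 1 + Rabs y0 + Rabs y1 + Rabs (mink (y0, y1) (y0, y1))).
  exists (c, 0); rewrite peval_u_dom.
  pose proof (Rle_abs y0); pose proof (Rle_abs (- y0)); pose proof (Rle_abs y1);
  pose proof (Rle_abs (- y1)); pose proof (Rle_abs (mink (y0, y1) (y0, y1))).
  pose proof (Rabs_pos y0); pose proof (Rabs_pos y1);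
  pose proof (Rabs_pos (mink (y0, y1) (y0, y1))).
  rewrite !Rabs_Ropp in *.
  assert (Hm : c + y0 - y1 >= 1 /\ c + y0 + y1 >= 1) by (unfold c; lra).
  assert (Hc : c * c >= c) by (assert (1 <= c) by (unfold c; lra); nra).
  apply Rmult_integral_contrapositive_currified; apply Rgt_not_eq.
  - unfold mink, padd; simpl; nra.
  - assert (mink (c, 0) (c, 0) = c * c) by (unfold mink; simpl; ring).
    unfold c in *; lra.
Qed.

Definition pneg (y : pt) : pt := pscal (-1) y.

Lemma pneg_involutive y : pneg (pneg y) = y.
Proof. destruct y; unfold pneg, pscal; simpl; f_equal; ring. Qed.

Lemma lc_plus_pneg y : lc_plus (pneg y) = - lc_plus y.
Proof. unfold lc_plus, pneg, pscal; simpl; ring. Qed.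

Lemma lc_minus_pneg y : lc_minus (pneg y) = - lc_minus y.
Proof. unfold lc_minus, pneg, pscal; simpl; ring. Qed.

Lemma u_map_inverse x y : Rdom x y -> mink x x <> mink y y ->
  Rdom (u_map x y) (pneg y) /\ u_map (u_map x y) (pneg y) = x.
Proof.
  intros HD Hmass; pose proof HD as [Hp Hm]%Rdom_lc.
  pose proof (slope_neq0 _ _ HD) as Hr; pose proof (Rminus_eq_contra _ _ Hmass) as Hk.
  rewrite (u_map_refl x y HD); set (r := slope (padd x y)) in *.
  assert (Ep : lc_plus (refl r x) + lc_plus (pneg y) =
               (mink x x - mink y y) / (lc_minus x + lc_minus y)).
  { rewrite lc_plus_refl, lc_plus_pneg, !mink_lc; unfold r, slope;
      rewrite lc_plus_padd, lc_minus_padd; field; exact Hm. }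
  assert (Em : lc_minus (refl r x) + lc_minus (pneg y) =
               (mink x x - mink y y) / (lc_plus x + lc_plus y)).
  { rewrite lc_minus_refl, lc_minus_pneg, !mink_lc; unfold r, slope;
      rewrite lc_plus_padd, lc_minus_padd; field; split; assumption. }
  assert (HD' : Rdom (refl r x) (pneg y))
    by (apply Rdom_lc; rewrite Ep, Em; split; apply Rdiv_neq0; assumption).
  split; [exact HD'|].
  rewrite (u_map_refl _ _ HD').
  replace (slope (padd (refl r x) (pneg y))) with r; [now apply refl_involutive|].
  unfold slope at 1; rewrite lc_plus_padd, lc_minus_padd, Ep, Em.
  unfold r, slope; rewrite lc_plus_padd, lc_minus_padd; field; repeat split; assumption.
Qed.

Lemma birational_ext f g : (forall x, f x = g x) -> birational f -> birational g.
Proof.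
  intros E (F & G & h1 & h2 & N1 & N2 & H1 & H2).
  exists F, G, h1, h2; split; [exact N1|]; split; [exact N2|]; split; [|exact H2].
  intros z Hz; rewrite <- E; exact (H1 z Hz).
Qed.

Lemma birational_u_map y : birational (fun x => u_map x y).
Proof.
  exists (u_ratmap y), (u_ratmap (pneg y)), (u_dom y), (u_dom (pneg y)).
  split; [apply u_dom_nonzero|]; split; [apply u_dom_nonzero|]; split.
  - intros x Hx; rewrite peval_u_dom in Hx; apply Rmult_neq_0_reg in Hx as [HD Hmass].
    destruct (u_map_inverse x y HD (Rminus_not_eq _ _ Hmass)) as [HD' Hinv].
    destruct (u_ratmap_spec y x HD) as [Fd ->].
    destruct (u_ratmap_spec (pneg y) _ HD') as [Gd ->]; auto.
  - intros w Hw; rewrite peval_u_dom in Hw; apply Rmult_neq_0_reg in Hw as [HD Hmass].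
    destruct (u_map_inverse w (pneg y) HD (Rminus_not_eq _ _ Hmass)) as [HD' Hinv].
    rewrite pneg_involutive in HD', Hinv.
    destruct (u_ratmap_spec (pneg y) w HD) as [Gd ->].
    destruct (u_ratmap_spec y _ HD') as [Fd ->]; auto.
Qed.

Lemma quadrirational_Rmap : quadrirational u_map v_map.
Proof.
  split; intro x; [apply birational_u_map|].
  apply (birational_ext (fun y => u_map y x)); [intro; symmetry; apply v_map_swap|].
  apply birational_u_map.
Qed.

Theorem proposition3p1 :
  YB_generic /\
  quadrirational u_map v_map /\
  (forall (x y u v : pt), Rdom x y -> Rmap x y = (u, v) ->
     forall zeta : C, mmul (Lax u zeta) (Lax v zeta) = mmul (Lax y zeta) (Lax x zeta)).
Proof.
  split; [exact yang_baxter|].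
  split; [exact quadrirational_Rmap|exact Lax_Rmap].
Qed.
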